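(* Let $\mathcal{K}(\mathbb{X},\tau_{\mathbb{X}})$ be the set of $\tau_{\mathbb{X}}$-compact subsets of $\mathbb{X}=\max(\mathbb{D})$, ordered by reverse inclusion ($C\sqsubseteq C'$ iff $C'\subseteq C$), and let $\mathcal{L}(\mathbb{D})$ be the set of Scott-closed subsets of $\mathbb{D}$, ordered by inclusion. For $d\in\mathbb{D}$ write $\mathord{\uparrow}_{\max}d=\{x\in\max(\mathbb{D}) : d\le x\}$. Define $\gamma:\mathcal{K}(\mathbb{X},\tau_{\mathbb{X}})\to\mathcal{L}(\mathbb{D})$ and $\alpha:\mathcal{L}(\mathbb{D})\to\mathcal{K}(\mathbb{X},\tau_{\mathbb{X}})$ by $\gamma(C)=\{d\in\mathbb{D} : C\subseteq\mathord{\uparrow}_{\max}d\}$ and $\alpha(L)=\bigcap_{d\in L}\mathord{\uparrow}_{\max}d$ (with $\alpha(\emptyset)=\mathbb{X}$). Then these maps are well defined and form a Galois connection with $\alpha$ the upper adjoint of $\gamma$: both are monotone, $L\subseteq\gamma(\alpha(L))$ for all $L\in\mathcal{L}(\mathbb{D})$, and $\alpha(\gamma(C))\sqsubseteq C$ (i.e. $C\subseteq\alpha(\gamma(C))$) for all $C\in\mathcal{K}(\mathbb{X},\tau_{\mathbb{X}})$.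
   Context: Fix a finite set $\mathrm{Act}$ of events. For a dcpo $D$, $K(D)$ denotes its compact elements; a bifinite (SFP) domain is an algebraic dcpo in which, for every finite $F\subseteq K(D)$, the set obtained from $F$ by repeatedly taking sets of minimal upper bounds is finite and contained in $K(D)$, and every upper bound of $F$ lies above a minimal upper bound of $F$. The Scott topology consists of the sets $U$ with $U={\uparrow}(U\cap K(D))$; the Lawson topology is generated by ${\uparrow}k\setminus{\uparrow}l$, $k,l\in K(D)$. The mixed powerdomain $\mathcal{M}(D)$ consists of pairs $(L,U)$ with $L$ Scott-closed, $U$ a Lawson-closed upper set, $L={\downarrow}(L\cap U)$, ordered by $(L,U)\le(L',U')$ iff $L\subseteq L'$ and $U'\subseteq U$. $\mathbb{D}$ is the initial solution over bifinite domains of $\mathbb{D}\cong\prod_{\alpha\in\mathrm{Act}}\mathcal{M}(\mathbb{D})$ (its elements model pointed modal transition systems up to refinement equivalence, maximal elements modelling pointed labelled transition systems up to bisimulation). $\mathbb{X}=\max(\mathbb{D})$ carries the topology $\tau_{\mathbb{X}}=\{U\cap\mathbb{X} : U\text{ Scott-open in }\mathbb{D}\}$. *)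

From Stdlib Require Import List.
Import ListNotations.
Set Implicit Arguments.

Section Domain.
Variables (D : Type) (le : D -> D -> Prop).

Definition is_poset : Prop :=
  (forall x, le x x) /\ (forall x y z, le x y -> le y z -> le x z) /\
  (forall x y, le x y -> le y x -> x = y).

Definition upper_bound (S : D -> Prop) (u : D) : Prop := forall s, S s -> le s u.
Definition is_lub (S : D -> Prop) (u : D) : Prop :=
  upper_bound S u /\ forall v, upper_bound S v -> le u v.
Definition directed (S : D -> Prop) : Prop :=
  (exists s, S s) /\ forall x y, S x -> S y -> exists z, S z /\ le x z /\ le y z.
Definition is_dcpo : Prop := is_poset /\ forall S, directed S -> exists u, is_lub S u.

Definition compact (k : D) : Prop :=
  forall S u, directed S -> is_lub S u -> le k u -> exists s, S s /\ le k s.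

Definition algebraic : Prop :=
  is_dcpo /\ forall x, directed (fun k => compact k /\ le k x) /\
                       is_lub (fun k => compact k /\ le k x) x.

Definition upset (S : D -> Prop) (x : D) : Prop := exists s, S s /\ le s x.
Definition downset (S : D -> Prop) (x : D) : Prop := exists s, S s /\ le x s.

Definition mub (F : list D) (m : D) : Prop :=
  upper_bound (fun x => In x F) m /\
  forall m', upper_bound (fun x => In x F) m' -> le m' m -> m' = m.

Inductive mub_closure (F : list D) : D -> Prop :=
 | mc_base x : In x F -> mub_closure F x
 | mc_step (G : list D) m : (forall g, In g G -> mub_closure F g) -> mub G m ->
     mub_closure F m.

Definition bifinite : Prop :=
  algebraic /\
  forall F : list D, (forall k, In k F -> compact k) ->
    (exists l : list D, forall x, mub_closure F x <-> In x l) /\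
    (forall x, mub_closure F x -> compact x) /\
    (forall u, upper_bound (fun x => In x F) u -> exists m, mub F m /\ le m u).

Definition scott_open (U : D -> Prop) : Prop :=
  forall x, U x <-> exists k, U k /\ compact k /\ le k x.
Definition scott_closed (L : D -> Prop) : Prop := scott_open (fun x => ~ L x).

(* Lawson topology: generated by the sets up k and D \ up l, k, l compact
   (basic opens  up k1 /\ ... /\ up km \ (up l1 \/ ... \/ up ln)) *)
Definition lawson_open (O : D -> Prop) : Prop :=
  forall x, O x -> exists ks ls : list D,
    (forall k, In k ks -> compact k /\ le k x) /\
    (forall l, In l ls -> compact l /\ ~ le l x) /\
    (forall y, (forall k, In k ks -> le k y) -> (forall l, In l ls -> ~ le l y) -> O y).
Definition lawson_closed (U : D -> Prop) : Prop := lawson_open (fun x => ~ U x).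

Definition mixed_pair (p : (D -> Prop) * (D -> Prop)) : Prop :=
  scott_closed (fst p) /\ lawson_closed (snd p) /\
  (forall x y, snd p x -> le x y -> snd p y) /\
  (forall x, fst p x <-> downset (fun y => fst p y /\ snd p y) x).

Definition MD : Type := { p : (D -> Prop) * (D -> Prop) | mixed_pair p }.

Definition MD_le (a b : MD) : Prop :=
  (forall x, fst (proj1_sig a) x -> fst (proj1_sig b) x) /\
  (forall x, snd (proj1_sig b) x -> snd (proj1_sig a) x).

Definition scott_closure (S : D -> Prop) (x : D) : Prop :=
  forall L, scott_closed L -> (forall s, S s -> L s) -> L x.
Definition image (f : D -> D) (S : D -> Prop) (y : D) : Prop := exists x, S x /\ y = f x.
Definition Mmap (f : D -> D) (p : (D -> Prop) * (D -> Prop)) : (D -> Prop) * (D -> Prop) :=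
  (scott_closure (image f (fst p)), upset (image f (snd p))).

Definition maximal (x : D) : Prop := forall y, le x y -> y = x.
Definition upmax (d : D) (x : D) : Prop := maximal x /\ le d x.

(* compactness in tau_X = { U /\ X | U Scott-open } *)
Definition tauX_compact (C : D -> Prop) : Prop :=
  forall (I : Type) (U : I -> D -> Prop), (forall i, scott_open (U i)) ->
    (forall x, C x -> exists i, U i x) ->
    exists l : list I, forall x, C x -> exists i, In i l /\ U i x.

Definition KX (C : D -> Prop) : Prop := (forall x, C x -> maximal x) /\ tauX_compact C.
Definition LD (L : D -> Prop) : Prop := scott_closed L.

Definition gammaC (C : D -> Prop) (d : D) : Prop := forall x, C x -> upmax d x.
Definition alphaL (L : D -> Prop) (x : D) : Prop := maximal x /\ forall d, L d -> upmax d x.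

End Domain.

(* D (with order le and phi : D -> prod_{a in Act} M(D)) is the initial solution of
   D = prod_{a in Act} M(D) over bifinite domains, expressed by the minimal-invariant
   characterization: phi is an order isomorphism, and id_D is the sup of the chain of
   deflations p_0 = const bot, p_{n+1} = phi^{-1} o (prod_a M(p_n)) o phi. *)
Definition initial_solution (Act D : Type) (le : D -> D -> Prop) (phi : D -> Act -> MD le) : Prop :=
  bifinite le /\
  (forall x y, le x y <-> forall a, MD_le (phi x a) (phi y a)) /\
  (forall m : Act -> MD le, exists x, forall a, MD_le (phi x a) (m a) /\ MD_le (m a) (phi x a)) /\
  exists (bot : D) (p : nat -> D -> D),
    (forall x, le bot x) /\
    (forall x, p 0 x = bot) /\
    (forall n x a z,
       (fst (proj1_sig (phi (p (S n) x) a)) z <-> fst (Mmap le (p n) (proj1_sig (phi x a))) z) /\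
       (snd (proj1_sig (phi (p (S n) x) a)) z <-> snd (Mmap le (p n) (proj1_sig (phi x a))) z)) /\
    (forall x, is_lub le (fun y => exists n, y = p n x) x).

(* The order-theoretic laws are immediate from the definitions, and gamma(C) is Scott
   closed in any algebraic dcpo; the content is the tau_X-compactness of alpha(L).
   The initial solution carries the deflations p_n, with p_(n+1) x given by M(p_n) on
   each component of phi x: they have finite range, satisfy p_m o p_n = p_m for m <= n,
   converge to the identity, and map maximal points to maximal points of their range
   (phi of a maximal point has maximal mixed-pair components, whose upper sets are
   approximated from above by p_n of maximal points of L /\ U).  If a Scott-open cover
   of alpha(L) left some point escaping at every level n, Koenig's lemma on the finitely
   branching tree of values p_n x would give a thread whose supremum is a point of
   alpha(L) outside the cover.  So one level n works, and the finitely many values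
   p_n x select a finite subcover. *)

From Stdlib Require Import List Classical ClassicalEpsilon IndefiniteDescription
  FunctionalExtensionality PropExtensionality Lia.
From mathcomp Require boolp classical_sets.
Import ListNotations.
Set Implicit Arguments.

Definition finite_range {T U : Type} (f : T -> U) : Prop :=
  exists l : list U, forall x, In (f x) l.

Lemma finite_choice {U I : Type} (P : U -> Prop) (Q : U -> I -> Prop) (l : list U) :
  (forall c, In c l -> P c -> exists i, Q c i) ->
  exists li : list I, (forall i, In i li -> exists c, In c l /\ P c /\ Q c i) /\
                      (forall c, In c l -> P c -> exists i, In i li /\ Q c i).
Proof.
  induction l as [|c0 l IH]; intro H.
  - exists []. split; [intros _ []|intros _ []].
  - destruct IH as [li [Hsound Hcomplete]]; [intros c Hc; apply H; right; exact Hc|].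
    destruct (classic (P c0)) as [Pc0|nPc0].
    + destruct (H c0 (or_introl eq_refl) Pc0) as [i0 Hi0].
      exists (i0 :: li). split.
      * intros i [<-|Hi]; [exists c0; simpl; auto|].
        destruct (Hsound i Hi) as [c [? ?]]. exists c. simpl. auto.
      * intros c [<-|Hc] Pc; [exists i0; simpl; auto|].
        destruct (Hcomplete c Hc Pc) as [i [? ?]]. exists i. simpl. auto.
    + exists li. split.
      * intros i Hi. destruct (Hsound i Hi) as [c [? ?]]. exists c. simpl. auto.
      * intros c [<-|Hc] Pc; [contradiction|auto].
Qed.

Lemma finite_range_of_finite_tests {T K U : Type} (f : T -> U) (Q : T -> K -> Prop)
    (keys : list K) :
  (forall x y, (forall k, In k keys -> (Q x k <-> Q y k)) -> f x = f y) -> finite_range f.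
Proof.
  intro Hdet.
  enough (H : forall R : T -> Prop,
            (forall x y, R x -> R y -> (forall k, In k keys -> (Q x k <-> Q y k)) -> f x = f y) ->
            exists l, forall x, R x -> In (f x) l).
  { destruct (H (fun _ => True)) as [l Hl]; [auto|]. exists l. auto. }
  clear Hdet. induction keys as [|k keys IH]; intros R HR.
  - destruct (classic (exists x0, R x0)) as [[x0 Rx0]|NR].
    + exists [f x0]. intros x Rx. left. apply HR; [auto|auto|intros _ []].
    + exists []. intros x Rx. exfalso. eauto.
  - destruct (IH (fun x => R x /\ Q x k)) as [l1 H1].
    { intros x y [Rx Qx] [Ry Qy] Hk. apply HR; auto. intros k' [<-|Hk']; [tauto|auto]. }
    destruct (IH (fun x => R x /\ ~ Q x k)) as [l2 H2].
    { intros x y [Rx Qx] [Ry Qy] Hk. apply HR; auto. intros k' [<-|Hk']; [tauto|auto]. }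
    exists (l1 ++ l2). intros x Rx. apply in_or_app. destruct (classic (Q x k)); auto.
Qed.

Lemma list_uniform_bound {U : Type} (R : U -> nat -> Prop) (l : list U) :
  (forall c m m', m <= m' -> R c m -> R c m') ->
  (forall c, In c l -> exists m, R c m) -> exists M, forall c, In c l -> R c M.
Proof.
  intros Hup. induction l as [|c0 l IH]; intro H.
  - exists 0. intros _ [].
  - destruct IH as [M HM]; [intros c Hc; apply H; right; exact Hc|].
    destruct (H c0 (or_introl eq_refl)) as [m0 Hm0].
    exists (Nat.max m0 M). intros c [->|Hc].
    + apply (Hup c m0); [lia|exact Hm0].
    + apply (Hup c M); [lia|auto].
Qed.

Lemma thread_choice {T : Type} (P : nat -> T -> Prop) (R : nat -> T -> T -> Prop) (c0 : T) :
  P 0 c0 -> (forall n c, P n c -> exists c', P (S n) c' /\ R n c c') ->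
  exists v : nat -> T, forall n, P n (v n) /\ R n (v n) (v (S n)).
Proof.
  intros H0 Hstep.
  assert (Htot : forall nc : nat * T, exists c',
             P (fst nc) (snd nc) -> P (S (fst nc)) c' /\ R (fst nc) (snd nc) c').
  { intros [n c]. destruct (classic (P n c)) as [Pc|nPc].
    - destruct (Hstep n c Pc) as [c' Hc']. exists c'. auto.
    - exists c. intro. contradiction. }
  destruct (functional_choice _ Htot) as [g Hg].
  exists (fix v n := match n with 0 => c0 | S n' => g (n', v n') end).
  intro n. induction n as [|n [IHP IHR]]; [split; [exact H0|apply (Hg (0, c0) H0)]|].
  split; [exact (proj1 (Hg (n, _) IHP))|]. apply (Hg (S n, _)). exact (proj1 (Hg (n, _) IHP)).
Qed.

Lemma pigeonhole_eventually {T U : Type} (g : T -> U) (Q : T -> Prop) (B : nat -> T -> Prop) :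
  finite_range g -> (forall m m' x, m <= m' -> B m' x -> B m x) ->
  (forall m, exists x, Q x /\ B m x) ->
  exists c, forall m, exists x, Q x /\ g x = c /\ B m x.
Proof.
  intros [l Hl] Hanti Hall. apply NNPP. intro Hno.
  destruct (list_uniform_bound (fun c m => ~ exists x, Q x /\ g x = c /\ B m x) l) as [M HM].
  - intros c m m' Hmm' Hm [x [Qx [Hgx Bx]]]. apply Hm. exists x. eauto.
  - intros c _. apply NNPP. intro Hc. apply Hno. exists c. intro m.
    apply NNPP. intro Hm. apply Hc. exists m. exact Hm.
  - destruct (Hall M) as [x [Qx Bx]]. apply (HM (g x) (Hl x)). exists x. auto.
Qed.

Lemma zorn_preorder {T : Type} (t0 : T) (R : T -> T -> Prop) :
  (forall t, R t t) -> (forall r s t, R r s -> R s t -> R r t) ->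
  (forall A : T -> Prop, (forall s t, A s -> A t -> R s t \/ R t s) ->
     exists t, forall s, A s -> R s t) ->
  exists t, forall s, R t s -> R s t.
Proof.
  intros Hrefl Htrans Hchain.
  destruct (@classical_sets.ZL_preorder T t0 (fun s t => boolp.asbool (R s t))) as [t Ht].
  - intro t. apply boolp.asboolT, Hrefl.
  - intros r s t Hrs Hst. apply boolp.asboolT.
    exact (Htrans _ _ _ (boolp.asboolW Hrs) (boolp.asboolW Hst)).
  - intros A HA. destruct (Hchain A) as [t Ht].
    + intros s t As At. destruct (HA s t As At); [left|right]; apply boolp.asboolW; assumption.
    + exists t. intros s As. apply boolp.asboolT, Ht, As.
  - exists t. intros s Hts. apply boolp.asboolW, Ht, boolp.asboolT, Hts.
Qed.

Section Koenig.
Variables (T : Type) (p : nat -> T -> T) (B : nat -> T -> Prop).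
Hypothesis p_finite : forall n, finite_range (p n).
Hypothesis p_succ_compat : forall n x, p n (p (S n) x) = p n x.
Hypothesis B_antitone : forall m m' x, m <= m' -> B m' x -> B m x.
Hypothesis B_nonempty : forall m, exists x, B m x.

Lemma koenig_thread :
  exists v : nat -> T, forall n, p n (v (S n)) = v n /\ exists x, B n x /\ p n x = v n.
Proof.
  (* [P n c]: the level-[n] value [c] is shared by [B]-witnesses of every depth. *)
  set (P n c := forall m, exists x, p n x = c /\ B m x).
  destruct (pigeonhole_eventually (fun _ => True) B (p_finite 0) B_antitone) as [c0 Hc0].
  { intro m. destruct (B_nonempty m) as [x Bx]. exists x. auto. }
  destruct (thread_choice P (fun n c c' => p n c' = c) c0) as [v Hv].
  - intro m. destruct (Hc0 m) as [x [_ Hx]]. exists x. exact Hx.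
  - intros n c Pc.
    destruct (pigeonhole_eventually (fun x => p n x = c) B (p_finite (S n)) B_antitone Pc)
      as [c' Hc'].
    exists c'. split.
    + intro m. destruct (Hc' m) as [x [_ Hx]]. exists x. exact Hx.
    + destruct (Hc' 0) as [x [Hxc [<- _]]]. rewrite p_succ_compat. exact Hxc.
  - exists v. intro n. split; [apply Hv|].
    destruct (proj1 (Hv n) n) as [x [Hx Bx]]. exists x. auto.
Qed.

End Koenig.

Section AlgebraicDomain.
Variables (D : Type) (le : D -> D -> Prop).
Hypothesis alg : algebraic le.

Lemma le_refl x : le x x.
Proof. destruct alg as [[[Hrefl _] _] _]. apply Hrefl. Qed.
Lemma le_trans x y z : le x y -> le y z -> le x z.
Proof. destruct alg as [[[_ [Htrans _]] _] _]. apply Htrans. Qed.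
Lemma le_antisym x y : le x y -> le y x -> x = y.
Proof. destruct alg as [[[_ [_ Hanti]] _] _]. apply Hanti. Qed.
Lemma directed_has_lub S : directed le S -> exists u, is_lub le S u.
Proof. destruct alg as [[_ Hdcpo] _]. apply Hdcpo. Qed.

Lemma is_lub_unique S u v : is_lub le S u -> is_lub le S v -> u = v.
Proof. intros [Hu Hu'] [Hv Hv']. apply le_antisym; auto. Qed.

Lemma scott_open_upper U x y : scott_open le U -> U x -> le x y -> U y.
Proof.
  intros HU Ux Hxy. apply HU in Ux. destruct Ux as [k [Uk [Ck Hkx]]].
  apply HU. exists k. repeat split; [exact Uk|exact Ck|eapply le_trans; eauto].
Qed.

Lemma scott_closed_lower L x y : scott_closed le L -> L y -> le x y -> L x.
Proof. intros HL Ly Hxy. apply NNPP. intro nLx. exact (scott_open_upper HL nLx Hxy Ly). Qed.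

Lemma scott_closed_directed_sup L S u :
  scott_closed le L -> directed le S -> (forall s, S s -> L s) -> is_lub le S u -> L u.
Proof.
  intros HL HS HSL Hu. apply NNPP. intro nLu. apply HL in nLu.
  destruct nLu as [k [nLk [Ck Hku]]]. destruct (Ck S u HS Hu Hku) as [s [Ss Hks]].
  exact (nLk (scott_closed_lower HL (HSL s Ss) Hks)).
Qed.

Lemma compact_separation x y : ~ le x y -> exists k, compact le k /\ le k x /\ ~ le k y.
Proof.
  intro Hxy. apply NNPP. intro Hno. apply Hxy.
  destruct (proj2 alg x) as [_ [_ Hleast]]. apply Hleast.
  intros k [Ck Hkx]. apply NNPP. intro Hky. apply Hno. exists k. auto.
Qed.

Lemma compact_bound_list x F : (forall k, In k F -> compact le k /\ le k x) ->
  exists k, compact le k /\ le k x /\ forall k', In k' F -> le k' k.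
Proof.
  intro HF. destruct (proj2 alg x) as [[[k0 [Ck0 Hk0]] Hdir] _].
  induction F as [|a F IH].
  - exists k0. repeat split; [exact Ck0|exact Hk0|intros _ []].
  - destruct IH as [k [Ck [Hkx Hall]]]; [intros k' Hk'; apply HF; right; exact Hk'|].
    destruct (Hdir k a) as [z [Hz [Hkz Haz]]]; [auto|apply HF; left; reflexivity|].
    exists z. repeat split; [apply Hz|apply Hz|].
    intros k' [<-|Hk']; [exact Haz|eapply le_trans; eauto].
Qed.

Lemma scott_closed_downset_finite (S : D -> Prop) (l : list D) :
  (forall y, S y -> In y l) -> scott_closed le (downset le S).
Proof.
  intros HSl x. split.
  - intro nSx.
    destruct (finite_choice S (fun c k => compact le k /\ le k x /\ ~ le k c) l)
      as [ks [Hks Hcover]].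
    { intros c _ Sc. apply compact_separation. intro Hxc. apply nSx. exists c. auto. }
    destruct (compact_bound_list (x := x) ks) as [k [Ck [Hkx Hall]]].
    { intros k Hk. destruct (Hks k Hk) as [c [_ [_ [? [? _]]]]]. auto. }
    exists k. split; [|auto]. intros [c [Sc Hkc]].
    destruct (Hcover c (HSl c Sc) Sc) as [k' [Hk' [_ [_ Hk'c]]]].
    apply Hk'c. eapply le_trans; [apply Hall; exact Hk'|exact Hkc].
  - intros [k [nSk [_ Hkx]]] [c [Sc Hxc]]. apply nSk. exists c. split; [exact Sc|].
    eapply le_trans; eauto.
Qed.

Lemma scott_closure_incl S s : S s -> scott_closure le S s.
Proof. intros Ss L _ HSL. auto. Qed.

Lemma scott_closure_closed S : scott_closed le (scott_closure le S).
Proof.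
  intro x. split.
  - intro nx. apply NNPP. intro Hno. apply nx. intros L HL HSL. apply NNPP. intro nLx.
    apply HL in nLx. destruct nLx as [k [nLk [Ck Hkx]]].
    apply Hno. exists k. repeat split; [|exact Ck|exact Hkx].
    intro Hk. exact (nLk (Hk L HL HSL)).
  - intros [k [nk [_ Hkx]]] Hx. apply nk. intros L HL HSL.
    exact (scott_closed_lower HL (Hx L HL HSL) Hkx).
Qed.

Lemma scott_closure_lower S x y : scott_closure le S y -> le x y -> scott_closure le S x.
Proof. apply scott_closed_lower, scott_closure_closed. Qed.

Lemma scott_closure_least S S' :
  (forall s, S s -> scott_closure le S' s) ->
  forall z, scott_closure le S z -> scott_closure le S' z.
Proof. intros HSS' z Hz. exact (Hz _ (scott_closure_closed S') HSS'). Qed.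

Lemma scott_closure_image_finite (f : D -> D) S z : finite_range f ->
  scott_closure le (image f S) z -> exists s, S s /\ le z (f s).
Proof.
  intros [l Hl] Hz.
  destruct (Hz (downset le (image f S))) as [c [[s [Ss ->]] Hzc]]; [| |exists s; auto].
  - apply scott_closed_downset_finite with (l := l). intros y [s [_ ->]]. apply Hl.
  - intros y Hy. exists y. split; [exact Hy|apply le_refl].
Qed.

Lemma lawson_closed_inter U V :
  lawson_closed le U -> lawson_closed le V -> lawson_closed le (fun x => U x /\ V x).
Proof.
  intros HU HV x Hx. destruct (classic (U x)) as [Ux|nUx].
  - destruct (HV x) as [ks [ls [Hks [Hls HO]]]]; [tauto|].
    exists ks, ls. split; [exact Hks|split; [exact Hls|]].
    intros y Hk Hl [_ Vy]. exact (HO y Hk Hl Vy).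
  - destruct (HU x nUx) as [ks [ls [Hks [Hls HO]]]].
    exists ks, ls. split; [exact Hks|split; [exact Hls|]].
    intros y Hk Hl [Uy _]. exact (HO y Hk Hl Uy).
Qed.

Lemma lawson_closed_upset_finite (S : D -> Prop) (l : list D) :
  (forall y, S y -> In y l) -> lawson_closed le (upset le S).
Proof.
  intros HSl x nSx.
  destruct (finite_choice S (fun c k => compact le k /\ le k c /\ ~ le k x) l)
    as [ls [Hls Hcover]].
  { intros c _ Sc. apply compact_separation. intro Hcx. apply nSx. exists c. auto. }
  exists [], ls. split; [intros _ []|split].
  - intros k Hk. destruct (Hls k Hk) as [c [_ [_ [? [_ ?]]]]]. auto.
  - intros y _ Hy [c [Sc Hcy]].
    destruct (Hcover c (HSl c Sc) Sc) as [k [Hk [_ [Hkc _]]]].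
    apply (Hy k Hk). eapply le_trans; eauto.
Qed.

Lemma gammaC_scott_closed C :
  (forall x, C x -> maximal le x) -> scott_closed le (gammaC le C).
Proof.
  intros HC x. split.
  - intro nx. assert (Hc : exists c, C c /\ ~ le x c).
    { apply NNPP. intro Hno. apply nx. intros c Cc. split; [exact (HC c Cc)|].
      apply NNPP. intro. apply Hno. eauto. }
    destruct Hc as [c [Cc Hxc]]. destruct (compact_separation Hxc) as [k [Ck [Hkx Hkc]]].
    exists k. split; [|auto]. intro Hk. exact (Hkc (proj2 (Hk c Cc))).
  - intros [k [nk [_ Hkx]]] Hx. apply nk. intros c Cc. split; [exact (HC c Cc)|].
    eapply le_trans; [exact Hkx|exact (proj2 (Hx c Cc))].
Qed.

Definition pair_le (P Q : (D -> Prop) * (D -> Prop)) : Prop :=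
  (forall x, fst P x -> fst Q x) /\ (forall x, snd Q x -> snd P x).

Definition maximal_pair (P : (D -> Prop) * (D -> Prop)) : Prop :=
  forall Q, mixed_pair le Q -> pair_le P Q -> pair_le Q P.

Lemma mixed_pair_add_below L U z :
  mixed_pair le (L, U) -> U z -> mixed_pair le (fun y => L y \/ le y z, U).
Proof.
  intros [HL [HU [HUup HLU]]] Uz; simpl in *.
  split; [|split; [exact HU|split; [exact HUup|]]]; simpl.
  - intro y. split.
    + intro ny. destruct (proj1 (HL y) (fun Ly => ny (or_introl Ly))) as [k1 [nLk1 [Ck1 Hk1]]].
      destruct (compact_separation (fun Hyz => ny (or_intror Hyz))) as [k2 [Ck2 [Hk2 Hk2z]]].
      destruct (compact_bound_list (x := y) [k1; k2]) as [k [Ck [Hky Hall]]].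
      { intros k' [<-|[<-|[]]]; auto. }
      exists k. split; [|auto]. intros [Lk|Hkz].
      * apply nLk1. eapply scott_closed_lower; [exact HL|exact Lk|apply Hall; simpl; auto].
      * apply Hk2z. eapply le_trans; [apply Hall; simpl; auto|exact Hkz].
    + intros [k [nk [_ Hky]]] [Ly|Hyz]; apply nk.
      * left. eapply scott_closed_lower; eauto.
      * right. eapply le_trans; eauto.
  - intro y. split.
    + intros [Ly|Hyz].
      * destruct (proj1 (HLU y) Ly) as [e [[Le Ue] Hye]]. exists e. auto.
      * exists z. split; [split; [right; apply le_refl|exact Uz]|exact Hyz].
    + intros [e [[[Le|Hez] _] Hye]].
      * left. eapply scott_closed_lower; eauto.
      * right. eapply le_trans; eauto.
Qed.

Lemma zorn_dcpo (S : D -> Prop) e :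
  (forall C u, directed le C -> (forall c, C c -> S c) -> is_lub le C u -> S u) -> S e ->
  exists s, S s /\ le e s /\ forall z, S z -> le s z -> z = s.
Proof.
  intros HS Se.
  set (T := {y : D | S y /\ le e y}).
  destruct (@zorn_preorder T (exist _ e (conj Se (le_refl e)))
              (fun s t => le (proj1_sig s) (proj1_sig t))) as [t Ht].
  - intro s. apply le_refl.
  - intros r s t. apply le_trans.
  - intros A HA. destruct (classic (exists s0, A s0)) as [[s0 As0]|nA].
    + set (C := fun y => exists s, A s /\ y = proj1_sig s).
      assert (HC : directed le C).
      { split; [exists (proj1_sig s0), s0; auto|].
        intros x y [s [As ->]] [t [At ->]]. destruct (HA s t As At) as [Hst|Hts].
        - exists (proj1_sig t). split; [exists t; auto|split; [exact Hst|apply le_refl]].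
        - exists (proj1_sig s). split; [exists s; auto|split; [apply le_refl|exact Hts]]. }
      destruct (directed_has_lub HC) as [u Hu].
      assert (Su : S u) by (apply (HS C u HC); [intros y [s [_ ->]]; apply (proj2_sig s)|exact Hu]).
      assert (Heu : le e u) by (apply (le_trans (proj2 (proj2_sig s0))), Hu; exists s0; auto).
      exists (exist _ u (conj Su Heu)). intros s As. apply Hu. exists s. auto.
    + exists (exist _ e (conj Se (le_refl e))). intros s As. exfalso. eauto.
  - destruct t as [s [Ss Hes]]. exists s. split; [exact Ss|split; [exact Hes|]].
    intros z Sz Hsz. apply le_antisym; [|exact Hsz].
    exact (Ht (exist _ z (conj Sz (le_trans Hes Hsz))) Hsz).
Qed.

Lemma maximal_pair_lower_below_maximal L U :
  mixed_pair le (L, U) -> maximal_pair (L, U) ->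
  forall l, L l -> exists s, L s /\ U s /\ maximal le s /\ le l s.
Proof.
  intros HP Hmax l Ll. pose proof HP as [HL [_ [HUup HLU]]]; simpl in *.
  destruct (proj1 (HLU l) Ll) as [e [LUe Hle]].
  destruct (zorn_dcpo (fun y => L y /\ U y) e) as [s [[Ls Us] [Hes Hsmax]]]; [|exact LUe|].
  - intros C u HC HCS Hu. split.
    + exact (scott_closed_directed_sup HL HC (fun c Cc => proj1 (HCS c Cc)) Hu).
    + destruct HC as [[c Cc] _]. apply (HUup c); [exact (proj2 (HCS c Cc))|apply Hu; exact Cc].
  - exists s. split; [exact Ls|split; [exact Us|split; [|eapply le_trans; eauto]]].
    intros z Hsz. assert (Uz : U z) by exact (HUup s z Us Hsz).
    assert (Hz : pair_le (L, U) (fun y => L y \/ le y z, U)) by (split; simpl; auto).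
    destruct (Hmax _ (mixed_pair_add_below z HP Uz) Hz) as [HzL _]; simpl in HzL.
    apply Hsmax; [split; [apply HzL; right; apply le_refl|exact Uz]|exact Hsz].
Qed.

Lemma Mmap_pair_le (f : D -> D) P Q :
  (forall x, fst P x -> fst (Mmap le f Q) (f x)) ->
  (forall x, snd Q x -> snd (Mmap le f P) (f x)) ->
  pair_le (Mmap le f P) (Mmap le f Q).
Proof.
  intros HL HU. split; simpl.
  - apply scott_closure_least. intros y [x [Px ->]]. exact (HL x Px).
  - intros z [y [[x [Qx ->]] Hz]]. destruct (HU x Qx) as [w [Hw Hwx]].
    exists w. split; [exact Hw|eapply le_trans; eauto].
Qed.

Lemma Mmap_mono (f : D -> D) P Q : pair_le P Q -> pair_le (Mmap le f P) (Mmap le f Q).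
Proof.
  intros [HL HU]. apply Mmap_pair_le.
  - intros x Px. apply scott_closure_incl. exists x. auto.
  - intros x Qx. exists (f x). split; [exists x; auto|apply le_refl].
Qed.

Lemma Mmap_compose (f g : D -> D) P :
  (forall x y, le x y -> le (f x) (f y)) -> finite_range g ->
  Mmap le f (Mmap le g P) = Mmap le (fun x => f (g x)) P.
Proof.
  intros Hf Hg. unfold Mmap; simpl. f_equal; apply functional_extensionality; intro z;
    apply propositional_extensionality; split.
  - apply scott_closure_least. intros y [x [Hx ->]].
    destruct (scott_closure_image_finite Hg Hx) as [s [Ps Hxs]].
    apply (scott_closure_lower (y := f (g s))); [apply scott_closure_incl; exists s; auto|auto].
  - apply scott_closure_least. intros y [x [Px ->]].
    apply scott_closure_incl. exists (g x). split; [apply scott_closure_incl; exists x; auto|auto].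
  - intros [y [[x [[w [[u [Pu ->]] Hgu]] ->]] Hz]].
    exists (f (g u)). split; [exists u; auto|eapply le_trans; [apply Hf; exact Hgu|exact Hz]].
  - intros [y [[u [Pu ->]] Hz]]. exists (f (g u)). split; [|exact Hz].
    exists (g u). split; [exists (g u); split; [exists u; auto|apply le_refl]|reflexivity].
Qed.

Section Deflation.
Variable f : D -> D.
Hypothesis f_deflationary : forall x, le (f x) x.
Hypothesis f_finite : finite_range f.
Hypothesis f_monotone : forall x y, le x y -> le (f x) (f y).
Hypothesis f_idempotent : forall x, f (f x) = f x.

Lemma maximal_pair_upper_approx L U :
  mixed_pair le (L, U) -> maximal_pair (L, U) ->
  forall u, U u -> exists s, L s /\ U s /\ maximal le s /\ le (f s) u.
Proof.
  intros HP Hmax. pose proof HP as [HL [HU [HUup HLU]]]; simpl in *.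
  (* (L, U /\ V) is again a mixed pair above (L, U), so maximality forces U into V. *)
  set (V := upset le (image f (fun s => L s /\ U s /\ maximal le s))).
  assert (HPV : mixed_pair le (L, fun y => U y /\ V y)).
  { split; [exact HL|split; [|split]]; simpl.
    - apply lawson_closed_inter; [exact HU|].
      destruct f_finite as [l Hl]. apply lawson_closed_upset_finite with (l := l).
      intros y [s [_ ->]]. apply Hl.
    - intros x y [Ux [c [Hc Hcx]]] Hxy. split; [exact (HUup x y Ux Hxy)|].
      exists c. split; [exact Hc|eapply le_trans; eauto].
    - intro y. split.
      + intro Ly.
        destruct (maximal_pair_lower_below_maximal HP Hmax y Ly) as [s [Ls [Us [Ms Hys]]]].
        exists s. split; [split; [exact Ls|split; [exact Us|]]|exact Hys].
        exists (f s). split; [exists s; auto|apply f_deflationary].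
      + intros [e [[Le _] Hye]]. eapply scott_closed_lower; eauto. }
  assert (HUV : pair_le (L, U) (L, fun y => U y /\ V y)) by (split; simpl; tauto).
  intros u Uu. destruct (proj2 (Hmax _ HPV HUV) u Uu) as [_ [y [[s [Hs ->]] Hsu]]].
  exists s. tauto.
Qed.

Lemma Mmap_maximal_pair_le_sym P Q :
  mixed_pair le P -> mixed_pair le Q -> maximal_pair Q ->
  (forall s w, maximal le s -> le (f s) (f w) -> f s = f w) ->
  pair_le (Mmap le f Q) (Mmap le f P) -> pair_le (Mmap le f P) (Mmap le f Q).
Proof.
  destruct P as [LP UP], Q as [LQ UQ].
  intros [_ [_ [_ HLUP]]] HQ HQmax Hrigid [HL HU]; simpl in *.
  assert (Happrox := maximal_pair_upper_approx HQ HQmax).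
  assert (Hbelow : forall s u, le (f s) u -> le (f s) (f u)).
  { intros s u Hsu. rewrite <- f_idempotent. apply f_monotone, Hsu. }
  apply Mmap_pair_le; simpl.
  - intros x LPx. destruct (proj1 (HLUP x) LPx) as [e [[LPe UPe] Hxe]].
    destruct (HU (f e)) as [y [[u [UQu ->]] Hue]].
    { exists (f e). split; [exists e; auto|apply le_refl]. }
    destruct (Happrox u UQu) as [s [LQs [_ [Ms Hsu]]]].
    apply (scott_closure_lower (y := f s)); [apply scott_closure_incl; exists s; auto|].
    rewrite (Hrigid s e Ms (le_trans (Hbelow s u Hsu) Hue)). exact (f_monotone Hxe).
  - intros x UQx. destruct (Happrox x UQx) as [s [LQs [_ [Ms Hsx]]]].
    assert (Hs : scott_closure le (image f LP) (f s)).
    { apply HL. apply scott_closure_incl. exists s. auto. }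
    destruct (scott_closure_image_finite f_finite Hs) as [l [LPl Hsl]].
    destruct (proj1 (HLUP l) LPl) as [e [[_ UPe] Hle]].
    exists (f e). split; [exists e; auto|].
    rewrite <- (Hrigid s e Ms (le_trans Hsl (f_monotone Hle))). exact (Hbelow s x Hsx).
Qed.

End Deflation.

Section DeflationCompactness.
Variable p : nat -> D -> D.
Hypothesis p_lub : forall x, is_lub le (fun y => exists n, y = p n x) x.
Hypothesis p_monotone : forall n x y, le x y -> le (p n x) (p n y).
Hypothesis p_finite : forall n, finite_range (p n).
Hypothesis p_compose : forall m n x, m <= n -> p m (p n x) = p m x.
Hypothesis p_maximal_in_range :
  forall n x w, maximal le x -> le (p n x) (p n w) -> p n x = p n w.

Lemma deflation_le n x : le (p n x) x.
Proof. apply (proj1 (p_lub x)). exists n. reflexivity. Qed.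

Lemma deflation_increasing m n x : m <= n -> le (p m x) (p n x).
Proof. intro Hmn. rewrite <- (p_compose x Hmn). apply deflation_le. Qed.

Definition thread (v : nat -> D) : Prop := forall n, p n (v (S n)) = v n.

Lemma thread_le v m n : thread v -> m <= n -> le (v m) (v n).
Proof.
  intros Hv Hmn. induction Hmn as [|n _ IH]; [apply le_refl|].
  apply (le_trans IH). rewrite <- (Hv n) at 1. apply deflation_le.
Qed.

Lemma thread_directed v : thread v -> directed le (fun y => exists n, y = v n).
Proof.
  intro Hv. split; [exists (v 0), 0; reflexivity|].
  intros x y [m ->] [n ->]. exists (v (Nat.max m n)).
  split; [exists (Nat.max m n); reflexivity|split; apply thread_le; auto; lia].
Qed.

Lemma thread_sup_maximal v y : thread v ->
  (forall n, exists x, maximal le x /\ p n x = v n) ->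
  is_lub le (fun z => exists n, z = v n) y -> maximal le y.
Proof.
  intros Hv Hmax Hy w Hyw.
  assert (Hpw : forall n, p n w = v n).
  { intro n. destruct (Hmax n) as [x [Mx Hx]]. rewrite <- Hx. symmetry.
    apply (p_maximal_in_range Mx). rewrite <- (p_compose x (le_n n)).
    apply p_monotone. rewrite Hx.
    apply (le_trans (proj1 Hy (v n) (ex_intro _ n eq_refl)) Hyw). }
  apply (is_lub_unique (S := fun z => exists n, z = v n)); [|exact Hy].
  destruct (p_lub w) as [Hub Hleast]. split.
  - intros z [n ->]. rewrite <- Hpw. apply Hub. exists n. reflexivity.
  - intros u Hu. apply Hleast. intros z [n ->]. rewrite Hpw. apply Hu. exists n. reflexivity.
Qed.

Lemma thread_sup_above v y d : (forall n, le (p n d) (v n)) ->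
  is_lub le (fun z => exists n, z = v n) y -> le d y.
Proof.
  intros Hd [Hy _]. apply (proj2 (p_lub d)). intros z [n ->].
  apply (le_trans (Hd n)). apply Hy. exists n. reflexivity.
Qed.

Lemma uniform_level_of_cover L (I : Type) (U : I -> D -> Prop) :
  (forall i, scott_open le (U i)) -> (forall x, alphaL le L x -> exists i, U i x) ->
  exists n, forall x, alphaL le L x -> exists i, U i (p n x).
Proof.
  intros HU Hcover. apply NNPP. intro Hno.
  set (B n x := alphaL le L x /\ forall i, ~ U i (p n x)).
  destruct (koenig_thread p B p_finite) as [v Hv].
  - intros n x. apply p_compose. auto.
  - intros m m' x Hmm' [Ax Hx]. split; [exact Ax|].
    intros i Hi. exact (Hx i (scott_open_upper (HU i) Hi (deflation_increasing x Hmm'))).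
  - intro m. apply NNPP. intro Hm. apply Hno. exists m. intros x Ax.
    apply NNPP. intro Hx. apply Hm. exists x. split; [exact Ax|]. intros i Hi. eauto.
  - assert (Hthread : thread v) by (intro n; apply Hv).
    destruct (directed_has_lub (thread_directed Hthread)) as [y Hy].
    assert (My : maximal le y).
    { apply (thread_sup_maximal Hthread); [|exact Hy].
      intro n. destruct (proj2 (Hv n)) as [x [[[Mx _] _] Hx]]. exists x. auto. }
    assert (Ay : alphaL le L y).
    { split; [exact My|]. intros d Ld. split; [exact My|].
      apply (thread_sup_above v); [|exact Hy].
      intro n. destruct (proj2 (Hv n)) as [x [[[_ Ax] _] <-]]. apply p_monotone, (Ax d Ld). }
    destruct (Hcover y Ay) as [i Hi]. apply (HU i) in Hi. destruct Hi as [k [Uk [Ck Hky]]].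
    destruct (Ck _ y (thread_directed Hthread) Hy Hky) as [z [[n ->] Hkv]].
    destruct (proj2 (Hv n)) as [x [[_ Hx] Hxv]].
    apply (Hx i). rewrite Hxv. exact (scott_open_upper (HU i) Uk Hkv).
Qed.

Lemma alphaL_tauX_compact L : tauX_compact le (alphaL le L).
Proof.
  intros I U HU Hcover. destruct (uniform_level_of_cover U HU Hcover) as [n Hn].
  destruct (p_finite n) as [l Hl].
  destruct (finite_choice (fun c => exists x, alphaL le L x /\ c = p n x) (fun c i => U i c) l)
    as [li [_ Hli]].
  { intros c _ [x [Ax ->]]. exact (Hn x Ax). }
  exists li. intros x Ax.
  destruct (Hli (p n x) (Hl x) (ex_intro _ x (conj Ax eq_refl))) as [i [Hi Ui]].
  exists i. split; [exact Hi|]. exact (scott_open_upper (HU i) Ui (deflation_le n x)).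
Qed.

End DeflationCompactness.

Section InitialSolution.
Variables (Act : Type) (acts : list Act) (phi : D -> Act -> MD le).
Variables (bot : D) (p : nat -> D -> D).
Hypothesis acts_complete : forall a, In a acts.
Hypothesis phi_order : forall x y, le x y <-> forall a, MD_le (phi x a) (phi y a).
Hypothesis phi_onto :
  forall m : Act -> MD le, exists x, forall a, MD_le (phi x a) (m a) /\ MD_le (m a) (phi x a).
Hypothesis p_zero : forall x, p 0 x = bot.
Hypothesis p_succ : forall n x a z,
  (fst (proj1_sig (phi (p (S n) x) a)) z <-> fst (Mmap le (p n) (proj1_sig (phi x a))) z) /\
  (snd (proj1_sig (phi (p (S n) x) a)) z <-> snd (Mmap le (p n) (proj1_sig (phi x a))) z).
Hypothesis p_lub : forall x, is_lub le (fun y => exists n, y = p n x) x.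

Lemma phi_p_succ n x a : proj1_sig (phi (p (S n) x) a) = Mmap le (p n) (proj1_sig (phi x a)).
Proof.
  rewrite (surjective_pairing (proj1_sig (phi (p (S n) x) a))).
  rewrite (surjective_pairing (Mmap le (p n) (proj1_sig (phi x a)))).
  f_equal; apply functional_extensionality; intro z; apply propositional_extensionality;
    apply p_succ.
Qed.

Lemma phi_injective x y :
  (forall a, proj1_sig (phi x a) = proj1_sig (phi y a)) -> x = y.
Proof.
  intro Hxy. apply le_antisym; apply phi_order; intro a; unfold MD_le; rewrite (Hxy a);
    split; auto.
Qed.

Lemma p_monotone n x y : le x y -> le (p n x) (p n y).
Proof.
  revert x y. induction n as [|n IH]; intros x y Hxy; [rewrite !p_zero; apply le_refl|].
  apply phi_order. intro a. unfold MD_le. rewrite !phi_p_succ. apply Mmap_mono, phi_order, Hxy.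
Qed.

Lemma p_finite n : finite_range (p n).
Proof.
  induction n as [|n [l Hl]]; [exists [bot]; intro x; rewrite p_zero; left; reflexivity|].
  (* p (S n) x is determined by which points of the range of p n lie in the lower and
     upper components of M(p n) (phi x a). *)
  set (keys := list_prod (list_prod acts l) [true; false]).
  set (test x (k : Act * D * bool) := let '(a, c, b) := k in
         if b then fst (Mmap le (p n) (proj1_sig (phi x a))) c
         else snd (Mmap le (p n) (proj1_sig (phi x a))) c).
  assert (Hkey : forall a z b, In (a, p n z, b) keys).
  { intros a z b. apply in_prod; [apply in_prod; auto|destruct b; simpl; auto]. }
  assert (Hle : forall x y, (forall k, In k keys -> (test x k <-> test y k)) ->
                  le (p (S n) x) (p (S n) y)).
  { intros x y Htest. apply phi_order. intro a. unfold MD_le. rewrite !phi_p_succ.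
    apply Mmap_pair_le.
    - intros z Hz. apply (proj1 (Htest _ (Hkey a z true))). simpl.
      apply scott_closure_incl. exists z. auto.
    - intros z Hz. apply (proj2 (Htest _ (Hkey a z false))). simpl.
      exists (p n z). split; [exists z; auto|apply le_refl]. }
  apply (finite_range_of_finite_tests (p (S n)) test keys).
  intros x y Htest. apply le_antisym; apply Hle; [exact Htest|].
  intros k Hk. symmetry. apply Htest, Hk.
Qed.

Lemma p_compose m n x : m <= n -> p m (p n x) = p m x.
Proof.
  revert n x. induction m as [|m IH]; intros [|n] x Hmn; [rewrite !p_zero; reflexivity..|lia|].
  apply phi_injective. intro a.
  rewrite !phi_p_succ, Mmap_compose by (apply p_monotone || apply p_finite).
  replace (fun y => p m (p n y)) with (p m) by (apply functional_extensionality; intro y;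
    symmetry; apply IH; lia).
  reflexivity.
Qed.

Lemma phi_maximal x a : maximal le x -> maximal_pair (proj1_sig (phi x a)).
Proof.
  intros Mx Q HQ HxQ.
  set (m b := if excluded_middle_informative (b = a) then exist _ Q HQ else phi x b).
  destruct (phi_onto m) as [x' Hx'].
  assert (Hxx' : le x x').
  { apply phi_order. intro b. destruct (Hx' b) as [_ Hmb]. unfold m in Hmb.
    destruct (excluded_middle_informative (b = a)) as [->|_]; [|exact Hmb].
    destruct HxQ as [HL HU], Hmb as [HL' HU']. split; auto. }
  rewrite (Mx x' Hxx') in Hx'. destruct (Hx' a) as [_ Hma]. unfold m in Hma.
  destruct (excluded_middle_informative (a = a)) as [_|Ha]; [exact Hma|contradiction].
Qed.

Lemma p_maximal_in_range n x w : maximal le x -> le (p n x) (p n w) -> p n x = p n w.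
Proof.
  revert x w. induction n as [|n IH]; intros x w Mx Hxw; [rewrite !p_zero; reflexivity|].
  apply le_antisym; [exact Hxw|]. apply phi_order. intro a. unfold MD_le.
  rewrite !phi_p_succ. apply (Mmap_maximal_pair_le_sym (f := p n)).
  - apply (deflation_le p p_lub).
  - apply p_finite.
  - apply p_monotone.
  - intro y. apply p_compose. auto.
  - apply proj2_sig.
  - apply proj2_sig.
  - apply phi_maximal, Mx.
  - exact IH.
  - pose proof (proj1 (phi_order _ _) Hxw a) as Hxwa. unfold MD_le in Hxwa.
    rewrite !phi_p_succ in Hxwa. exact Hxwa.
Qed.

Lemma alphaL_KX L : KX le (alphaL le L).
Proof.
  split; [intros x [Mx _]; exact Mx|].
  apply (alphaL_tauX_compact p p_lub p_monotone p_finite p_compose p_maximal_in_range).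
Qed.

End InitialSolution.

End AlgebraicDomain.

Theorem theorem4p6 (Act : Type) (HAct : exists l : list Act, forall a, In a l)
  (D : Type) (le : D -> D -> Prop) (phi : D -> Act -> MD le)
  (Hsol : initial_solution phi) :
  (* well defined *)
  (forall C, KX le C -> LD le (gammaC le C)) /\
  (forall L, LD le L -> KX le (alphaL le L)) /\
  (* gamma monotone: C' ⊑ C'' (i.e. C'' ⊆ C') implies gamma C' ⊆ gamma C'' *)
  (forall C1 C2, KX le C1 -> KX le C2 -> (forall x, C2 x -> C1 x) ->
     forall d, gammaC le C1 d -> gammaC le C2 d) /\
  (* alpha monotone: L1 ⊆ L2 implies alpha L1 ⊑ alpha L2 (i.e. alpha L2 ⊆ alpha L1) *)
  (forall L1 L2, LD le L1 -> LD le L2 -> (forall d, L1 d -> L2 d) ->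
     forall x, alphaL le L2 x -> alphaL le L1 x) /\
  (forall L, LD le L -> forall d, L d -> gammaC le (alphaL le L) d) /\
  (forall C, KX le C -> forall x, C x -> alphaL le (gammaC le C) x).
Proof.
  destruct HAct as [acts Hacts].
  destruct Hsol as [[alg _] [Horder [Honto [bot [p [_ [Hp0 [Hpsucc Hlub]]]]]]]].
  split; [|split; [|split; [|split; [|split]]]].
  - intros C [HC _]. exact (gammaC_scott_closed alg C HC).
  - intros L _. exact (alphaL_KX alg acts phi p Hacts Horder Honto Hp0 Hpsucc Hlub L).
  - intros C1 C2 _ _ H21 d Hd x C2x. exact (Hd x (H21 x C2x)).
  - intros L1 L2 _ _ H12 x [Mx Hx]. split; [exact Mx|]. intros d L1d. exact (Hx d (H12 d L1d)).
  - intros L _ d Ld x [_ Hx]. exact (Hx d Ld).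
  - intros C [HC _] x Cx. split; [exact (HC x Cx)|]. intros d Hd. exact (Hd x Cx).
Qed.
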